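(* Let $K$ be a field and $I\subset R=K[x_1,\ldots,x_n]$ a monomial ideal. Then: (i) for any ordered $n$-tuple $(i_1,\ldots,i_n)$ of positive integers, $I$ has the nearly copersistence property if and only if its expansion $I^*\subseteq R^*$ with respect to $(i_1,\ldots,i_n)$ has the nearly copersistence property; (ii) for any weight $W$ over $R$, $I$ has the nearly copersistence property if and only if the weighted ideal $I_W$ has the nearly copersistence property.
   Context: A monomial ideal $I$ in a polynomial ring $S$ over $K$ has the nearly copersistence property if there exist a positive integer $s$ and a monomial prime ideal $\mathfrak{p}$ of $S$ such that $\mathrm{Ass}_S(S/I^m)\cup\{\mathfrak{p}\}\supseteq\mathrm{Ass}_S(S/I^{m+1})$ for all $1\le m\le s$, and $\mathrm{Ass}_S(S/I^m)\supseteq\mathrm{Ass}_S(S/I^{m+1})$ for all $m\ge s+1$. Expansion: $R^*=K[x_{11},\ldots,x_{1i_1},\ldots,x_{n1},\ldots,x_{ni_n}]$ and $\mathfrak{p}_j=(x_{j1},\ldots,x_{ji_j})\subseteq R^*$; if $I$ has minimal monomial generators $x_1^{a_k(1)}\cdots x_n^{a_k(n)}$, $k=1,\ldots,m$, then $I^*=\sum_{k=1}^m\mathfrak{p}_1^{a_k(1)}\cdots\mathfrak{p}_n^{a_k(n)}$. Weighting: a weight is a function $W:\{x_1,\ldots,x_n\}\to\mathbb{N}$ (positive integers), $w_i=W(x_i)$; $I_W$ is generated by $h(u)$ for $u$ ranging over the minimal monomial generators of $I$, where $h:R\to R$ is the $K$-algebra homomorphism $h(x_i)=x_i^{w_i}$.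 *)

From HB Require Import structures.
From mathcomp Require Import all_boot all_algebra.
From mathcomp Require Import mpoly.
Set Implicit Arguments. Unset Strict Implicit. Unset Printing Implicit Defensive.
Import GRing.Theory.
Local Open Scope ring_scope.

Section Ideals.
Variable R : comRingType.

Definition gen (S : R -> Prop) : R -> Prop :=
  fun f => exists s : seq (R * R),
    (forall q, q \in s -> S q.2) /\ f = \sum_(q <- s) q.1 * q.2.

Definition is_ideal (P : R -> Prop) : Prop :=
  [/\ P 0, (forall a b, P a -> P b -> P (a + b)) & (forall r a, P a -> P (r * a))].

Definition same_ideal (P Q : R -> Prop) : Prop := forall g, P g <-> Q g.

Definition ideal_mul (I J : R -> Prop) : R -> Prop :=
  gen (fun f => exists a b, [/\ I a, J b & f = a * b]).

Fixpoint ideal_pow (I : R -> Prop) (k : nat) : R -> Prop :=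
  match k with
  | 0 => fun _ => True
  | k'.+1 => ideal_mul (ideal_pow I k') I
  end.

Definition colon (J : R -> Prop) (f : R) : R -> Prop := fun g => J (g * f).

Definition prime_ideal (P : R -> Prop) : Prop :=
  [/\ is_ideal P, ~ P 1 & forall a b, P (a * b) -> P a \/ P b].

(* P \in Ass_R(R/J) : P is a prime ideal of the form J : f *)
Definition ass (J P : R -> Prop) : Prop :=
  prime_ideal P /\ exists f : R, same_ideal P (colon J f).

End Ideals.

Section Monomial.
Variables (K : fieldType) (n : nat).

Definition monomial_prime (P : {mpoly K[n]} -> Prop) : Prop :=
  exists A : {set 'I_n},
    same_ideal P (gen (fun f => exists2 i, i \in A & f = 'X_i)).

Definition is_monomial_ideal (I : {mpoly K[n]} -> Prop) : Prop :=
  exists S : 'X_{1..n} -> Prop,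
    same_ideal I (gen (fun f => exists2 m, S m & f = 'X_[m])).

Definition mingen (I : {mpoly K[n]} -> Prop) (m : 'X_{1..n}) : Prop :=
  I 'X_[m] /\
  forall m' : 'X_{1..n}, I 'X_[m'] -> (forall i, m' i <= m i)%N -> m' = m.

Definition nearly_copersistent (I : {mpoly K[n]} -> Prop) : Prop :=
  exists s : nat, (0 < s)%N /\
  exists P, monomial_prime P /\
    (forall m : nat, (1 <= m <= s)%N -> forall Q,
        ass (ideal_pow I m.+1) Q -> ass (ideal_pow I m) Q \/ same_ideal Q P) /\
    (forall m : nat, (s.+1 <= m)%N -> forall Q,
        ass (ideal_pow I m.+1) Q -> ass (ideal_pow I m) Q).

(* R^* has N = i_1 + ... + i_n variables; the variables of block j
   (x_{j1},...,x_{j i_j}) are those with index v in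
   [i_1+...+i_{j-1}, i_1+...+i_j). *)
Definition expN (i : 'I_n -> nat) : nat := (\sum_(j < n) i j)%N.

Definition exp_prime (i : 'I_n -> nat) (j : 'I_n) : {mpoly K[expN i]} -> Prop :=
  gen (fun f => exists2 v : 'I_(expN i),
         (\sum_(l < n | (l < j)%N) i l <= v < \sum_(l < n | (l <= j)%N) i l)%N
         & f = 'X_v).

Definition exp_monideal (i : 'I_n -> nat) (a : 'X_{1..n}) : {mpoly K[expN i]} -> Prop :=
  foldr (@ideal_mul _) (fun _ => True)
        [seq ideal_pow (@exp_prime i j) (a j) | j <- enum 'I_n].

Definition expansion (i : 'I_n -> nat) (I : {mpoly K[n]} -> Prop)
  : {mpoly K[expN i]} -> Prop :=
  gen (fun f => exists2 u, mingen I u & @exp_monideal i u f).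

Definition wmon (w : 'I_n -> nat) (u : 'X_{1..n}) : 'X_{1..n} :=
  [multinom (w j * u j)%N | j < n].

Definition weighted (w : 'I_n -> nat) (I : {mpoly K[n]} -> Prop)
  : {mpoly K[n]} -> Prop :=
  gen (fun f => exists2 u, mingen I u & f = 'X_[wmon w u]).

End Monomial.

Arguments exp_prime {K n} i j.
Arguments exp_monideal {K n} i a.
Arguments expansion {K n} i I.
Arguments weighted {K n} w I.
Arguments nearly_copersistent {K n} I.
Arguments mingen {K n} I m.

(* For a monomial ideal J, every associated prime of R/J is a monomial prime P_A, and P_A
   is associated exactly when J : x^c = P_A for some monomial x^c, a condition on exponent
   vectors only.  So nearly copersistence of I is a property of the sets A attached in this
   way to the powers I^m.  On monomials both constructions are pulled back from I along a
   map of exponents: x^d lies in (I^* )^m iff x^(bsum d) lies in I^m, where bsum adds up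
   the exponents within each block of variables, and x^d lies in (I_W)^m iff x^(d / w)
   lies in I^m (componentwise floor).  These maps carry the witnesses c for I^m to
   witnesses for the new powers and back, sending A to its block expansion (resp. to A
   itself) injectively, so the sets attached to the powers correspond. *)

From HB Require Import structures.
From mathcomp Require Import all_boot all_algebra.
From mathcomp Require Import mpoly.
From Stdlib Require Import Classical ClassicalEpsilon.
From mathcomp Require Import ring zify.
Set Implicit Arguments. Unset Strict Implicit. Unset Printing Implicit Defensive.
Import GRing.Theory.
Local Open Scope ring_scope.

Section Ideals.
Variable R : comNzRingType.
Implicit Types (S T P Q J : R -> Prop).

Lemma gen_ideal S : is_ideal (gen S).
Proof.
split.
- by exists [::]; split => //; rewrite big_nil.
- move=> a b [s [Hs ->]] [t [Ht ->]]; exists (s ++ t); split; last by rewrite big_cat.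
  by move=> q; rewrite mem_cat => /orP [] H; [apply: Hs H|apply: Ht H].
- move=> r a [s [Hs ->]]; exists [seq (r * q.1, q.2) | q <- s]; split.
    by move=> q /mapP [q' Hq' ->]; exact: Hs Hq'.
  by rewrite big_map mulr_sumr; apply: eq_bigr => q _; rewrite mulrA.
Qed.

Lemma gen_mem S x : S x -> gen S x.
Proof.
by exists [:: (1, x)]; split; [move=> q; rewrite inE => /eqP -> | rewrite big_seq1 mul1r].
Qed.

Lemma ideal0 P : is_ideal P -> P 0.
Proof. by case. Qed.

Lemma idealD P a b : is_ideal P -> P a -> P b -> P (a + b).
Proof. by case=> _ H _; apply: H. Qed.

Lemma idealM P r a : is_ideal P -> P a -> P (r * a).
Proof. by case=> _ _ H; apply: H. Qed.

Lemma idealMr P r a : is_ideal P -> P a -> P (a * r).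
Proof. by move=> HP Pa; rewrite mulrC; apply: idealM. Qed.

Lemma idealB P a b : is_ideal P -> P a -> P b -> P (a - b).
Proof. by move=> HP Pa Pb; rewrite -mulN1r; apply: idealD => //; apply: idealM. Qed.

Lemma ideal_sum P (I : eqType) (s : seq I) (F : I -> R) :
  is_ideal P -> (forall q, q \in s -> P (F q)) -> P (\sum_(q <- s) F q).
Proof.
move=> HP; elim: s => [|a s IH] H; first by rewrite big_nil; apply: ideal0.
rewrite big_cons; apply: idealD => //; first by apply: H; rewrite inE eqxx.
by apply: IH => q qs; apply: H; rewrite inE qs orbT.
Qed.

Lemma gen_min S P : is_ideal P -> (forall x, S x -> P x) -> forall x, gen S x -> P x.
Proof. by move=> HP HS x [s [Hs ->]]; apply: ideal_sum => // q /Hs /HS; apply: idealM. Qed.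

Lemma gen_mono S T x : (forall y, S y -> gen T y) -> gen S x -> gen T x.
Proof. by move=> H; apply: gen_min => //; apply: gen_ideal. Qed.

Lemma same_idealC P Q : same_ideal P Q -> same_ideal Q P.
Proof. by move=> H g; split => /H. Qed.

Lemma same_ideal_trans P Q T : same_ideal P Q -> same_ideal Q T -> same_ideal P T.
Proof. by move=> H1 H2 g; split => [/H1/H2|/H2/H1]. Qed.

Lemma ideal_same P Q : same_ideal P Q -> is_ideal P -> is_ideal Q.
Proof.
move=> E [H0 HD HM]; split; first by apply/E.
- by move=> a b /E Pa /E Pb; apply/E; apply: HD.
- by move=> r a /E Pa; apply/E; apply: HM.
Qed.

Lemma gen_same S T : (forall x, S x <-> T x) -> same_ideal (gen S) (gen T).
Proof. by move=> E g; split; apply: gen_mono => y /E; apply: gen_mem. Qed.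

Lemma ideal_mul_same J1 J2 J1' J2' : same_ideal J1 J1' -> same_ideal J2 J2' ->
  same_ideal (ideal_mul J1 J2) (ideal_mul J1' J2').
Proof.
by move=> E1 E2; apply: gen_same => x; split => -[a [b [/E1 ? /E2 ? ->]]]; exists a, b.
Qed.

Lemma prime_ideal_same P Q : same_ideal P Q -> prime_ideal P -> prime_ideal Q.
Proof.
move=> E [HI H1 HM]; split; [exact: ideal_same HI | by move/E |].
by move=> a b /E /HM [] /E; [left|right].
Qed.

Lemma ass_same J Q Q' : same_ideal Q Q' -> ass J Q -> ass J Q'.
Proof.
move=> E [HP [f Hf]]; split; first exact: prime_ideal_same HP.
by exists f; apply: same_ideal_trans Hf; apply: same_idealC.
Qed.

Lemma colon_same J f f' : is_ideal J -> J (f - f') -> same_ideal (colon J f) (colon J f').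
Proof.
move=> HJ Jd g; rewrite /colon; split => H.
  have -> : g * f' = g * f - g * (f - f') by ring.
  exact: idealB HJ H (idealM _ HJ Jd).
have -> : g * f = g * f' + g * (f - f') by ring.
exact: idealD HJ H (idealM _ HJ Jd).
Qed.

Lemma prime_colonMr J Q f b : prime_ideal Q -> same_ideal Q (colon J f) -> ~ Q b ->
  same_ideal Q (colon J (f * b)).
Proof.
case=> QI _ QP Hf Qb h; rewrite /colon.
have -> : h * (f * b) = h * b * f by ring.
split => [Qh|Jhb]; first by apply/Hf; apply: idealMr.
by have /Hf /QP [] : colon J f (h * b).
Qed.

End Ideals.

Section MonomialIdeals.
Variables (K : fieldType) (n : nat).
Local Notation R := {mpoly K[n]}.
Local Notation M := 'X_{1..n}.
Implicit Types (S T : M -> Prop) (J P Q : R -> Prop).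

Lemma mnm1_le (m : M) j : (0 < m j)%N -> (U_(j) <= m)%MM.
Proof. by move=> mj; apply/mnm_lepP => l; rewrite mnm1E; case: eqP => [<-|]. Qed.

Lemma mdeg_ind (P : M -> Prop) :
  P 0%MM -> (forall a j, P a -> P (a + U_(j))%MM) -> forall a, P a.
Proof.
move=> P0 PS; suff H k a : (mdeg a < k)%N -> P a by move=> a; apply: H (ltnSn _).
elim: k a => [|k IH] a // sza; have [-> //|anz] := eqVneq a 0%MM.
have [j aj] : exists j, (0 < a j)%N.
  apply: NNPP => Hn; case/negP: anz; apply/eqP/mnmP => j; rewrite mnm0E.
  by apply/eqP; rewrite -leqn0 leqNgt; apply/negP => aj; apply: Hn; exists j.
have le := mnm1_le aj; rewrite -(submK le); apply/PS/IH.
by have := mdegD (a - U_(j)) U_(j); rewrite submK // mdeg1; lia.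
Qed.

Lemma lepm_add (a b c d : M) : (a <= c)%MM -> (b <= d)%MM -> (a + b <= c + d)%MM.
Proof.
by move=> /mnm_lepP H1 /mnm_lepP H2; apply/mnm_lepP => i; rewrite !mnmDE leq_add.
Qed.

Lemma mpolyX_subK (s m : M) : (s <= m)%MM -> 'X_[m] = 'X_[m - s] * 'X_[s] :> R.
Proof. by move=> H; rewrite -mpolyXD submK. Qed.

Definition mideal S : R -> Prop := gen (fun f => exists2 m, S m & f = 'X_[m]).

Definition mmultiple S (m : M) := exists2 s, S s & (s <= m)%MM.

Lemma midealP S f : mideal S f <-> (forall m, m \in msupp f -> mmultiple S m).
Proof.
split.
- apply: (gen_min (P := fun f => forall m, m \in msupp f -> mmultiple S m)).
    split => [m|a b Ha Hb m /msuppD_le|r a Ha m /msuppM_le /allpairsP].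
    + by rewrite msupp0.
    + by rewrite mem_cat => /orP [/Ha|/Hb].
    + case=> [[m1 m2] [_ /Ha [s Ss le] /= ->]]; exists s => //.
      exact: lepm_trans le (lem_addl _ _).
  move=> x [m Sm ->] m'.
  by rewrite msuppX inE => /eqP ->; exists m => //; apply: lepm_refl.
- move=> H; rewrite (mpolyE f); apply: ideal_sum; first exact: gen_ideal.
  move=> m /H [s Ss le]; rewrite -mul_mpolyC (mpolyX_subK le) mulrA.
  by apply: idealM; [exact: gen_ideal | apply: gen_mem; exists s].
Qed.

Lemma midealX S m : mideal S 'X_[m] <-> mmultiple S m.
Proof.
rewrite midealP; split; first by apply; rewrite msuppX inE.
by move=> H m'; rewrite msuppX inE => /eqP ->.
Qed.

(* [is_monomial_ideal] in a form that names the generators: the monomials of [J]. *)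
Definition monomial J := same_ideal J (mideal (fun m => J 'X_[m])).

Lemma monomial_ideal J : monomial J -> is_ideal J.
Proof. by move=> E; apply: (ideal_same (same_idealC E)); apply: gen_ideal. Qed.

Lemma monomialP J : is_monomial_ideal J -> monomial J.
Proof.
case=> S E g; split => [/E|].
  apply: gen_mono => y [m Sm ->]; apply: gen_mem; exists m => //.
  by apply/E/gen_mem; exists m.
move=> H; apply/E; move: H; apply: gen_mono => y [m Jm ->].
exact/E.
Qed.

Lemma monomial_up J (a b : M) : monomial J -> J 'X_[a] -> (a <= b)%MM -> J 'X_[b].
Proof. by move=> E Ja le; apply/E/midealX; exists a. Qed.

Lemma monomial_supp J f : monomial J -> J f <-> (forall m, m \in msupp f -> J 'X_[m]).
Proof.
move=> E; split => [/E /midealP H m /H [s Js le]|H]; first exact: monomial_up Js le.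
by apply/E/midealP => m /H Jm; exists m => //; apply: lepm_refl.
Qed.

Lemma monomial_suppMX J f c m : monomial J -> J (f * 'X_[c]) -> m \in msupp f ->
  J 'X_[c + m].
Proof.
move=> E /(monomial_supp _ E) Jf mf; apply: Jf.
by rewrite (perm_mem (msuppMX f c)); apply: map_f.
Qed.

Lemma gen_monomials (T : Type) (G : T -> Prop) (Jf : T -> R -> Prop) :
  (forall u, G u -> monomial (Jf u)) ->
  same_ideal (gen (fun f => exists2 u, G u & Jf u f))
             (mideal (fun d => exists2 u, G u & Jf u 'X_[d])).
Proof.
move=> H g; split; apply: gen_mono.
  move=> y [u Gu /(H u Gu)]; apply: gen_mono => z [m Jm ->].
  by apply: gen_mem; exists m => //; exists u.
by move=> y [m [u Gu Jm] ->]; apply: gen_mem; exists u.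
Qed.

Lemma monomial_gen (T : Type) (G : T -> Prop) (Jf : T -> R -> Prop) :
  (forall u, G u -> monomial (Jf u)) -> monomial (gen (fun f => exists2 u, G u & Jf u f)).
Proof. by move=> H; apply: monomialP; eexists; exact: gen_monomials. Qed.

Lemma genX (T : Type) (G : T -> Prop) (Jf : T -> R -> Prop) d :
  (forall u, G u -> monomial (Jf u)) ->
  gen (fun f => exists2 u, G u & Jf u f) 'X_[d] <-> exists2 u, G u & Jf u 'X_[d].
Proof.
move=> H; rewrite (gen_monomials H _) midealX; split.
  by case=> s [u Gu Ju] le; exists u => //; apply: monomial_up (H u Gu) Ju le.
by case=> u Gu Ju; exists d; [exists u | apply: lepm_refl].
Qed.

Definition msum S T (c : M) := exists a b, [/\ S a, T b & c = (a + b)%MM].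

Lemma mideal_mul S T : same_ideal (ideal_mul (mideal S) (mideal T)) (mideal (msum S T)).
Proof.
move=> g; split.
- apply: gen_min; first exact: gen_ideal.
  move=> x [a [b [/midealP Ha /midealP Hb ->]]]; apply/midealP => m.
  move/msuppM_le /allpairsP => [[m1 m2] [/Ha [s Ss le1] /Hb [t Tt le2] /= ->]].
  by exists (s + t)%MM; [exists s, t | apply: lepm_add].
- apply: gen_mono => y [m [a [b [Sa Tb ->]]] ->]; apply: gen_mem.
  by exists 'X_[a], 'X_[b]; split; rewrite ?mpolyXD //; apply: gen_mem; [exists a|exists b].
Qed.

Section Product.
Variables J1 J2 : R -> Prop.
Hypotheses (E1 : monomial J1) (E2 : monomial J2).

Let E := same_ideal_trans (ideal_mul_same E1 E2) (mideal_mul _ _).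

Lemma ideal_mulX c : ideal_mul J1 J2 'X_[c] <->
  exists a b, [/\ J1 'X_[a], J2 'X_[b] & (a + b <= c)%MM].
Proof.
rewrite (E ('X_[c])) midealX; split; first by case=> _ [a [b [Ja Jb ->]]] le; exists a, b.
by case=> a [b [Ja Jb le]]; exists (a + b)%MM => //; exists a, b.
Qed.

Lemma monomial_mul : monomial (ideal_mul J1 J2).
Proof.
move=> g; split => [/E|H].
  apply: gen_mono => y [m [a [b [Ja Jb ->]]] ->]; apply: gen_mem; exists (a + b)%MM => //.
  by apply/ideal_mulX; exists a, b; split => //; apply: lepm_refl.
apply/E; move: H; apply: gen_mono => y [m /ideal_mulX [a [b [Ja Jb le]]] ->].
by apply/midealX; exists (a + b)%MM => //; exists a, b.
Qed.

End Product.

Lemma monomial_total : monomial (fun _ : R => True).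
Proof.
move=> g; split => // _; rewrite -[g]mulr1 -mpolyX0.
by apply: idealM; [exact: gen_ideal | apply: gen_mem; exists 0%MM].
Qed.

Lemma monomial_pow J m : monomial J -> monomial (ideal_pow J m).
Proof.
by move=> E; elim: m => [|m IH] /=; [exact: monomial_total | exact: monomial_mul].
Qed.

Lemma ideal_powSX J m c : monomial J -> ideal_pow J m.+1 'X_[c] <->
  exists a b, [/\ ideal_pow J m 'X_[a], J 'X_[b] & (a + b <= c)%MM].
Proof. by move=> E; apply: ideal_mulX => //; apply: monomial_pow. Qed.

Lemma mingen_ex (I : R -> Prop) (c : M) : monomial I -> I 'X_[c] ->
  exists2 u, mingen I u & (u <= c)%MM.
Proof.
move=> EI; suff H k (c' : M) : (mdeg c' < k)%N -> I 'X_[c'] ->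
    exists2 u, mingen I u & (u <= c')%MM by apply: H (ltnSn _).
elim: k c' => [|k IH] {}c // szc Ic.
case: (classic (exists m', [/\ I 'X_[m'], (m' <= c)%MM & m' <> c])).
  case=> m' [Im' le ne]; have : (mdeg m' < k)%N.
    have := mdegD (c - m') m'; rewrite submK //.
    have : mdeg (c - m') != 0%N.
      by rewrite mdeg_eq0; apply/eqP => e; apply: ne; rewrite -(submK le) e add0m.
    lia.
  by case/IH => // u mu le'; exists u => //; exact: lepm_trans le' le.
move=> Hn; exists c; last exact: lepm_refl.
split => // m' Im' le; apply: NNPP => ne; apply: Hn; exists m'; split => //.
exact/mnm_lepP.
Qed.

End MonomialIdeals.

Section AssociatedPrimes.
Variables (K : fieldType) (n : nat).
Local Notation R := {mpoly K[n]}.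
Local Notation M := 'X_{1..n}.
Implicit Types (J Q : R -> Prop) (A : {set 'I_n}).

Definition mprime A : R -> Prop := gen (fun f => exists2 i, i \in A & f = 'X_i).

Lemma mprime_mideal A :
  same_ideal (mprime A) (mideal (fun m => exists2 i, i \in A & m = U_(i)%MM)).
Proof.
apply: gen_same => x; split; first by case=> i iA ->; exists U_(i)%MM => //; exists i.
by case=> m [i iA ->] ->; exists i.
Qed.

Lemma mprimeP A f :
  mprime A f <-> (forall m, m \in msupp f -> exists2 i, i \in A & (0 < m i)%N).
Proof.
rewrite (mprime_mideal A f) midealP; split => H m /H.
  by case=> s [i iA ->] /mnm_lepP /(_ i); rewrite mnm1E eqxx; exists i.
by case=> i iA /mnm1_le; exists U_(i)%MM => //; exists i.
Qed.

Lemma mprimeX A m : mprime A 'X_[m] <-> exists2 i, i \in A & (0 < m i)%N.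
Proof.
rewrite mprimeP; split; first by apply; rewrite msuppX inE.
by move=> H m'; rewrite msuppX inE => /eqP ->.
Qed.

Lemma mprime_inj A B : same_ideal (mprime A) (mprime B) -> A = B.
Proof.
have H C i : mprime C 'X_i <-> i \in C.
  rewrite mprimeX; split => [[j jC]|iC]; last by exists i; rewrite // mnm1E eqxx.
  by rewrite mnm1E; case: eqP => [->|].
by move=> E; apply/setP => i; apply/idP/idP => /H /E /H.
Qed.

Definition avoids A (m : M) := [forall i in A, m i == 0%N].

Definition mres A (f : R) : R := \sum_(m <- msupp f | avoids A m) f@_m *: 'X_[m].

Lemma mresE A f k : (mres A f)@_k = if avoids A k then f@_k else 0.
Proof.
rewrite /mres raddf_sum /= big_mkcond /=.
have E m : (if avoids A m then (f@_m *: 'X_[m])@_k else 0) =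
    if avoids A m then f@_m * (m == k)%:R else 0.
  by case: (avoids A m); rewrite ?mcoeffZ ?mcoeffX ?mcoeff0.
under eq_bigr => m _ do rewrite E.
case: (boolP (k \in msupp f)) => kin.
  rewrite (bigD1_seq k) //= ?msupp_uniq // eqxx mulr1 big1 ?addr0 //.
  by move=> m /negPf mk; rewrite mk mulr0; case: (avoids A m).
rewrite big1_seq; first by move/memN_msupp_eq0: kin => ->; case: (avoids A k).
move=> m min; case: eqP => [e|]; first by move: min; rewrite e (negPf kin).
by rewrite mulr0; case: (avoids A m).
Qed.

Lemma mprimeE A f : mprime A f <-> forall m, m \in msupp f -> ~~ avoids A m.
Proof.
rewrite mprimeP; split => H m /H.
  by case=> i iA mi; apply/forall_inP => /(_ i iA) /eqP mi0; rewrite mi0 in mi.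
by rewrite negb_forall_in => /existsP [i /andP [iA mi]]; exists i; rewrite // lt0n.
Qed.

Lemma mprime_subr_mres A f : mprime A (f - mres A f).
Proof.
apply/mprimeE => m; rewrite mcoeff_msupp mcoeffB mresE.
by case: (avoids A m); rewrite ?subrr ?eqxx.
Qed.

Lemma mprime_mres0 A f : mprime A f <-> mres A f = 0.
Proof.
rewrite mprimeE; split => [H|/mpolyP H m].
  apply/mpolyP => m; rewrite mresE mcoeff0.
  case: (boolP (avoids A m)) => // am; apply/eqP; rewrite mcoeff_eq0.
  by apply: contraL am; apply: H.
rewrite mcoeff_msupp; apply: contra => am; move: (H m); rewrite mresE am mcoeff0 => ->.
by [].
Qed.

Lemma mlead_mres_avoids A f : mres A f != 0 -> avoids A (mlead (mres A f)).
Proof.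
move/mlead_supp; rewrite mcoeff_msupp mresE.
by case: (avoids A _) => //; rewrite eqxx.
Qed.

(* Modulo [mprime A] every polynomial reduces to its part [mres A] avoiding [A], and the
   leading monomial of a product of two such parts still avoids [A]. *)
Lemma mprime_prime A : prime_ideal (mprime A).
Proof.
have HI : is_ideal (mprime A) by apply: gen_ideal.
split => //; first by rewrite -mpolyX0 mprimeX => -[i _]; rewrite mnm0E.
move=> a b Hab; apply: NNPP => /not_or_and [Ha Hb].
set a0 := mres A a; set b0 := mres A b.
have a0nz : a0 != 0 by apply/eqP => /mprime_mres0.
have b0nz : b0 != 0 by apply/eqP => /mprime_mres0.
have H0 : mprime A (a0 * b0).
  have -> : a0 * b0 = a * b - ((a - a0) * b + a0 * (b - b0)) by ring.
  apply: (idealB HI) => //; apply: (idealD HI).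
    exact/(idealMr _ HI)/mprime_subr_mres.
  exact/(idealM _ HI)/mprime_subr_mres.
move/mprimeE: H0 => /(_ (mlead a0 + mlead b0)%MM).
rewrite mcoeff_msupp mleadcM mulf_neq0 ?mleadc_eq0 // => /(_ isT) /forall_inP [i iA].
move/forall_inP: (mlead_mres_avoids a0nz) => /(_ i iA) /eqP.
by move/forall_inP: (mlead_mres_avoids b0nz) => /(_ i iA) /eqP; rewrite mnmDE => -> ->.
Qed.

Lemma prime_idealX Q m : prime_ideal Q -> Q 'X_[m] -> exists i, (0 < m i)%N /\ Q 'X_i.
Proof.
case=> _ Q1 QP; elim/mdeg_ind: m => [|a j IH]; first by rewrite mpolyX0.
rewrite mpolyXD => /QP [/IH [i [ai Qi]]|Qj]; [exists i | exists j]; split => //.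
  by rewrite mnmDE; lia.
by rewrite mnmDE mnm1E eqxx; lia.
Qed.

Lemma prime_mprime Q A : (forall i, i \in A <-> Q 'X_i) -> prime_ideal Q ->
  (forall g m, Q g -> m \in msupp g -> Q 'X_[m]) -> same_ideal Q (mprime A).
Proof.
move=> inA HQ Qsupp g; case: (HQ) => QI _ _.
split => [Qg|]; last by apply: gen_min QI _ _ => x [i /inA Qi ->].
apply/mprimeP => m /(Qsupp _ _ Qg) /(prime_idealX HQ) [i [mi /inA iA]].
by exists i.
Qed.

Lemma size_msupp_sub_term (f : R) m : m \in msupp f ->
  (size (msupp (f - f@_m *: 'X_[m]))).+1 = size (msupp f).
Proof.
move=> mf; rewrite (perm_size (msupp_rem f m)) size_rem // prednK //.
by case: (msupp f) mf.
Qed.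

Lemma ideal_mlead_supp Q : is_ideal Q -> (forall g, Q g -> g != 0 -> Q 'X_[mlead g]) ->
  forall g m, Q g -> m \in msupp g -> Q 'X_[m].
Proof.
move=> QI Hl; suff H k g : (size (msupp g) < k)%N ->
    forall m, Q g -> m \in msupp g -> Q 'X_[m].
  by move=> g; apply: H (ltnSn _).
elim: k g => [|k IH] g // szg m Qg mg.
have gnz : g != 0 by apply: contraTneq mg => ->; rewrite msupp0.
have Ql := Hl g Qg gnz; have [-> //|ne] := eqVneq m (mlead g).
apply: (IH (g - g@_(mlead g) *: 'X_[mlead g])).
- by move: szg; rewrite -(size_msupp_sub_term (mlead_supp gnz)).
- by rewrite -mul_mpolyC; apply: idealB QI Qg (idealM _ QI Ql).
- by rewrite (perm_mem (msupp_rem g _)) mem_rem_uniq ?msupp_uniq // inE ne mg.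
Qed.

Lemma colon_sub_term J f m : is_ideal J -> J 'X_[m] ->
  same_ideal (colon J f) (colon J (f - f@_m *: 'X_[m])).
Proof.
move=> HJ Jm; apply: colon_same => //.
have -> : f - (f - f@_m *: 'X_[m]) = (f@_m)%:MP * 'X_[m] by rewrite mul_mpolyC; ring.
exact: idealM.
Qed.

Lemma colon_mlead J Q f : monomial J -> prime_ideal Q -> same_ideal Q (colon J f) ->
  f != 0 -> (forall b a, ~ Q 'X_[b] -> a \in msupp f -> ~ J 'X_[b + a]) ->
  same_ideal Q (colon J 'X_[mlead f]).
Proof.
move=> EJ HQ Hf fnz HnJ; case: (HQ) => QI _ _.
have QX b : Q 'X_[b] <-> J 'X_[b + mlead f].
  split=> [/Hf Jbf|Jb]; last by apply: NNPP => Qb; apply: HnJ Qb (mlead_supp fnz) Jb.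
  by apply: monomial_suppMX EJ _ (mlead_supp fnz); rewrite mulrC.
have Qsupp : forall g m, Q g -> m \in msupp g -> Q 'X_[m].
  apply: (ideal_mlead_supp QI) => g /Hf Jg gnz; apply/QX.
  have := (monomial_supp _ EJ).1 Jg; apply.
  by rewrite mcoeff_msupp mleadcM mulf_neq0 ?mleadc_eq0.
move=> h; split => [Qh|Jh].
  apply/(monomial_supp _ EJ) => m; rewrite (perm_mem (msuppMX h _)) => /mapP [b bh ->].
  by rewrite addmC; apply/QX; apply: Qsupp Qh bh.
rewrite (mpolyE h); apply: ideal_sum (QI) _ => b bh; rewrite -mul_mpolyC.
by apply: idealM QI _; apply/QX; rewrite addmC; apply: monomial_suppMX EJ Jh bh.
Qed.

(* Multiplying [f] by a monomial outside [Q] keeps the colon ideal, and a term of [f]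
   lying in [J] can be dropped; when neither applies, the leading monomial works. *)
Lemma ass_colonX J Q f : monomial J -> prime_ideal Q -> same_ideal Q (colon J f) ->
  exists c, same_ideal Q (colon J 'X_[c]).
Proof.
move=> EJ HQ; have HJ := monomial_ideal EJ; case: (HQ) => _ Q1 _.
suff H k f' : (size (msupp f') < k)%N -> same_ideal Q (colon J f') ->
    exists c, same_ideal Q (colon J 'X_[c]) by apply: H (ltnSn _).
elim: k f' => [|k IH] {}f // szf Hf.
case: (classic (exists b a, [/\ ~ Q 'X_[b], a \in msupp f & J 'X_[b + a]])).
  case=> b [a [Qb af Jba]]; set g := f * 'X_[b].
  have bag : (b + a)%MM \in msupp g by rewrite mcoeff_msupp mcoeffMX -mcoeff_msupp.
  apply: (IH (g - g@_(b + a) *: 'X_[b + a])).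
    have szg : size (msupp g) = size (msupp f) by rewrite (perm_size (msuppMX f b)) size_map.
    by rewrite -ltnS (size_msupp_sub_term bag) szg.
  exact: same_ideal_trans (prime_colonMr HQ Hf Qb) (colon_sub_term _ HJ Jba).
move=> Hn; exists (mlead f); apply: colon_mlead => // [|b a Qb af Jba].
  by apply/eqP => f0; apply: Q1; apply/Hf; rewrite /colon f0 mulr0; apply: ideal0.
by apply: Hn; exists b, a.
Qed.

(* [ass_witness J c A] says exactly that [J : x^c] is the monomial prime [mprime A]. *)
Definition ass_witness J (c : M) A :=
  [/\ ~ J 'X_[c], (forall i, i \in A -> J 'X_[c + U_(i)]) &
      (forall d : M, (forall i, i \in A -> d i = 0%N) -> ~ J 'X_[c + d])].

Definition ass_set J A := exists c, ass_witness J c A.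

Lemma ass_set_ass J A : monomial J -> ass_set J A -> ass J (mprime A).
Proof.
move=> EJ [c [Jc HA Hd]]; split; first exact: mprime_prime.
exists 'X_[c] => g; split => [/mprimeP Hg|Jg].
  apply/(monomial_supp _ EJ) => m; rewrite (perm_mem (msuppMX g c)).
  case/mapP => b /Hg [i iA /mnm1_le bi] ->.
  exact: monomial_up EJ (HA i iA) (lepm_add (lepm_refl _) bi).
apply/mprimeP => b bg; apply: NNPP => H; apply: (Hd b) (monomial_suppMX EJ Jg bg) => i iA.
by apply/eqP; rewrite -leqn0 leqNgt; apply/negP => bi; apply: H; exists i.
Qed.

Lemma ass_ass_set J Q : monomial J -> ass J Q ->
  exists2 A, ass_set J A & same_ideal Q (mprime A).
Proof.
move=> EJ [HQ [f Hf]]; have [c Hc] := ass_colonX EJ HQ Hf; case: (HQ) => _ Q1 _.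
have QX b : Q 'X_[b] <-> J 'X_[b + c] by rewrite mpolyXD; apply: Hc.
pose A := [set i : 'I_n | if excluded_middle_informative (Q 'X_i) then true else false].
have inA i : i \in A <-> Q 'X_i by rewrite inE; case: excluded_middle_informative.
exists A.
  exists c; split.
  - by move=> Jc; apply: Q1; rewrite -mpolyX0; apply/QX; rewrite add0m.
  - by move=> i /inA /QX; rewrite addmC.
  - move=> d Hd Jcd; have /(prime_idealX HQ) [i [di /inA /Hd]] : Q 'X_[d].
      by apply/QX; rewrite addmC.
    lia.
apply: (prime_mprime inA HQ) => g m /Hc Jg mg; apply/QX; rewrite addmC.
exact: monomial_suppMX EJ Jg mg.
Qed.

Lemma ass_mprimeP J A : monomial J -> ass J (mprime A) <-> ass_set J A.
Proof.
move=> EJ; split; last exact: ass_set_ass.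
by case/(ass_ass_set EJ) => B HB /mprime_inj ->.
Qed.

End AssociatedPrimes.

Definition nc_sets n (F : nat -> {set 'I_n} -> Prop) :=
  exists s, (0 < s)%N /\ exists A0,
    (forall m, (1 <= m <= s)%N -> forall A, F m.+1 A -> F m A \/ A = A0) /\
    (forall m, (s.+1 <= m)%N -> forall A, F m.+1 A -> F m A).

Lemma nearly_copersistent_sets (K : fieldType) n (I : {mpoly K[n]} -> Prop) :
  monomial I -> nearly_copersistent I <-> nc_sets (fun m => ass_set (ideal_pow I m)).
Proof.
move=> EI; have EP m := monomial_pow m EI.
have assP m A := ass_mprimeP A (EP m).
split.
- case=> s [s0 [P [[A0 E0] [H1 H2]]]]; exists s; split => //; exists A0; split.
    move=> m ms A /assP /(H1 m ms) [/assP|E]; [by left | right].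
    exact/mprime_inj/(same_ideal_trans E E0).
  by move=> m ms A /assP /(H2 m ms) /assP.
- case=> s [s0 [A0 [H1 H2]]]; exists s; split => //.
  exists (mprime A0); split; first by exists A0.
  split=> m ms Q /(ass_ass_set (EP _)) [A HA E].
    case: (H1 m ms A HA) => [/assP H|<-]; last by right.
    by left; apply: ass_same (same_idealC E) H.
  exact/(ass_same (same_idealC E))/assP/(H2 m ms A HA).
Qed.

Lemma nc_sets_transfer n1 n2 (F1 : nat -> {set 'I_n1} -> Prop)
    (F2 : nat -> {set 'I_n2} -> Prop) (phi : {set 'I_n1} -> {set 'I_n2}) :
  injective phi -> (forall m B, F2 m B <-> exists2 A, B = phi A & F1 m A) ->
  nc_sets F1 <-> nc_sets F2.
Proof.
move=> inj E; split.
- case=> s [s0 [A0 [H1 H2]]]; exists s; split => //; exists (phi A0); split.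
    move=> m ms B /E [A -> /(H1 m ms)] [HA|->]; last by right.
    by left; apply/E; exists A.
  by move=> m ms B /E [A -> /(H2 m ms) HA]; apply/E; exists A.
- case=> s [s0 [B0 [H1 H2]]]; exists s; split => //.
  exists (odflt set0 [pick A | phi A == B0]); split.
    move=> m ms A HA; have /(H1 m ms) : F2 m.+1 (phi A) by apply/E; exists A.
    case=> [/E [A' /inj -> HA']|e]; first by left.
    right; case: pickP => [A' /eqP e'|/(_ A)]; last by rewrite e eqxx.
    by apply: inj; rewrite e e'.
  move=> m ms A HA.
  by have /(H2 m ms) /E [A' /inj -> //] : F2 m.+1 (phi A) by apply/E; exists A.
Qed.

Section Blocks.
Variables (n : nat) (i : 'I_n -> nat).
Hypothesis ipos : forall j, (0 < i j)%N.
Local Notation N := (expN i).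
Implicit Types (j : 'I_n) (v w : 'I_N) (d : 'X_{1..N}).

Definition blo (j : 'I_n) := (\sum_(l < n | (l < j)%N) i l)%N.
Definition bhi (j : 'I_n) := (\sum_(l < n | (l <= j)%N) i l)%N.
Definition inblock (j : 'I_n) (v : 'I_N) : bool := (blo j <= v < bhi j)%N.

Lemma bhi_blo j : bhi j = (blo j + i j)%N.
Proof.
rewrite /bhi (bigD1 j) //= addnC; congr (_ + _)%N; apply: eq_bigl => l.
by rewrite ltn_neqAle andbC.
Qed.

Lemma bhi_le_blo j j' : (j < j')%N -> (bhi j <= blo j')%N.
Proof.
move=> jj; rewrite /blo (bigID (fun l : 'I_n => (l <= j)%N)) /=.
apply: leq_trans (leq_addr _ _); apply: eq_leq; apply: eq_bigl => l.
by case: (leqP l j) => lj; rewrite ?andbT ?andbF // (leq_ltn_trans lj jj).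
Qed.

Lemma bhi_le_N j : (bhi j <= N)%N.
Proof. by rewrite /expN (bigID (fun l : 'I_n => (l <= j)%N)) /= leq_addr. Qed.

Lemma inblock_uniq j j' v : inblock j v -> inblock j' v -> j = j'.
Proof.
rewrite /inblock => /andP [a b] /andP [c d]; apply: val_inj => /=.
case: (ltngtP j j') => // [/bhi_le_blo|/bhi_le_blo] h; lia.
Qed.

Lemma blo_lt_N j : (blo j < N)%N.
Proof. by apply: leq_trans (bhi_le_N j); rewrite bhi_blo -addn1 leq_add2l. Qed.

Definition block_first j : 'I_N := Ordinal (blo_lt_N j).

Lemma inblock_first j : inblock j (block_first j).
Proof. by rewrite /inblock /= leqnn /= bhi_blo -addn1 leq_add2l. Qed.

(* The exponent of the image of [x^d] under the substitution [x_(j,k) |-> x_j]. *)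
Definition bsum (d : 'X_{1..N}) : 'X_{1..n} :=
  [multinom (\sum_(v < N | inblock j v) d v)%N | j < n].

Lemma bsumE d j : bsum d j = (\sum_(v < N | inblock j v) d v)%N.
Proof. exact: mnmE. Qed.

Lemma bsumD d d' : bsum (d + d')%MM = (bsum d + bsum d')%MM.
Proof.
apply/mnmP => j; rewrite mnmDE !bsumE -big_split /=; apply: eq_bigr => v _.
by rewrite mnmDE.
Qed.

Lemma bsum_mono d d' : (d <= d')%MM -> (bsum d <= bsum d')%MM.
Proof.
move/mnm_lepP => H; apply/mnm_lepP => j; rewrite !bsumE; apply: leq_sum => v _; exact: H.
Qed.

Lemma bsum0 : bsum 0%MM = 0%MM.
Proof. by apply/mnmP => j; rewrite bsumE mnm0E big1 // => v _; rewrite mnm0E. Qed.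

Lemma bsumU v j : bsum U_(v)%MM j = inblock j v.
Proof.
rewrite bsumE big_mkcond (bigD1 v) //= mnm1E eqxx big1 ?addn0.
  by case: (inblock j v).
by move=> w /negPf wv; rewrite mnm1E eq_sym wv; case: (inblock j w).
Qed.

Lemma bsumU_inblock v j : inblock j v -> bsum U_(v)%MM = U_(j)%MM.
Proof.
move=> bv; apply/mnmP => j'; rewrite bsumU mnm1E.
case: eqP => [<-|ne]; first by rewrite bv.
by case: (boolP (inblock j' v)) => // /(inblock_uniq bv) e; case: ne.
Qed.

Lemma bsumU_outside v : (forall j, ~~ inblock j v) -> bsum U_(v)%MM = 0%MM.
Proof. by move=> H; apply/mnmP => j; rewrite bsumU mnm0E (negPf (H j)). Qed.

Lemma bsumB a d : (a <= d)%MM -> bsum (d - a)%MM = (bsum d - bsum a)%MM.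
Proof.
move=> le; apply/mnmP => j; rewrite mnmBE -{2}(submK le) bsumD mnmDE; lia.
Qed.

Lemma bsum_gt0 d j : (0 < bsum d j)%N -> exists2 v, inblock j v & (0 < d v)%N.
Proof.
rewrite bsumE => H; apply: NNPP => Hn; move: H; rewrite big1 // => v bv.
by apply/eqP; rewrite -leqn0 leqNgt; apply/negP => dv; apply: Hn; exists v.
Qed.

Lemma bsum_ge d j v : inblock j v -> (d v <= bsum d j)%N.
Proof. by move=> bv; rewrite bsumE (bigD1 v) //= leq_addr. Qed.

Lemma bsum_split a' d : (a' <= bsum d)%MM -> exists2 a, (a <= d)%MM & bsum a = a'.
Proof.
elim/mdeg_ind: a' d => [|a' j IH] d le.
  by exists 0%MM; [apply/mnm_lepP => v; rewrite mnm0E | exact: bsum0].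
have [a0 a0d sa0] := IH d (lepm_trans (lem_addr _ _) le).
have : (0 < bsum (d - a0)%MM j)%N.
  rewrite bsumB // mnmBE sa0; move/mnm_lepP: le => /(_ j); rewrite mnmDE mnm1E eqxx; lia.
case/bsum_gt0 => v bv dv.
exists (a0 + U_(v))%MM; last by rewrite bsumD sa0 (bsumU_inblock bv).
apply/mnm_lepP => w; rewrite mnmDE mnm1E; move/mnm_lepP: a0d => /(_ w).
move: dv; rewrite mnmBE; case: eqP => [<-|_]; lia.
Qed.

Lemma bsum_lift a : exists c, bsum c = a /\
  forall v, (forall j, inblock j v -> a j = 0%N) -> c v = 0%N.
Proof.
elim/mdeg_ind: a => [|a j [c [sc Hc]]].
  by exists 0%MM; split; [exact: bsum0 | move=> v _; rewrite mnm0E].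
exists (c + U_(block_first j))%MM; split.
  by rewrite bsumD sc (bsumU_inblock (inblock_first j)).
move=> v Hv; rewrite mnmDE mnm1E Hc => [|j' /Hv]; last by rewrite mnmDE; lia.
case: eqP => // e; move: (Hv j); rewrite -e inblock_first mnmDE mnm1E eqxx.
by move=> /(_ isT); lia.
Qed.

Definition mnm_inblock j d : 'X_{1..N} :=
  [multinom if inblock j v then d v else 0%N | v < N].

Definition mnm_offblock j d : 'X_{1..N} :=
  [multinom if inblock j v then 0%N else d v | v < N].

Lemma mnm_inblock_offblock j d : (mnm_inblock j d + mnm_offblock j d)%MM = d.
Proof. by apply/mnmP => v; rewrite mnmDE !mnmE; case: (inblock j v); lia. Qed.

Lemma bsum_inblock j d : bsum (mnm_inblock j d) j = bsum d j.
Proof. by rewrite !bsumE; apply: eq_bigr => v bv; rewrite mnmE bv. Qed.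

Lemma bsum_offblock j j' d : j' != j -> bsum (mnm_offblock j d) j' = bsum d j'.
Proof.
move=> ne; rewrite !bsumE; apply: eq_bigr => v bv; rewrite mnmE.
case: (boolP (inblock j v)) => // bj; by rewrite (inblock_uniq bv bj) eqxx in ne.
Qed.

Definition expand_set (A : {set 'I_n}) : {set 'I_N} :=
  [set v | [exists j in A, inblock j v]].

Lemma expand_set_inj : injective expand_set.
Proof.
move=> A B E; apply/setP => j.
have H C : (block_first j \in expand_set C) = (j \in C).
  rewrite inE; apply/existsP/idP => [[j' /andP [jC b]]|jC].
    by rewrite (inblock_uniq (inblock_first j) b).
  by exists j; rewrite jC inblock_first.
by rewrite -H E H.
Qed.

End Blocks.

Section Expansion.
Variables (K : fieldType) (n : nat) (i : 'I_n -> nat).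
Local Notation N := (expN i).
Local Notation RN := {mpoly K[N]}.
Implicit Types (j : 'I_n) (v : 'I_N) (d : 'X_{1..N}).

Lemma exp_prime_mprime j : same_ideal (exp_prime (K:=K) i j) (mprime [set v | inblock j v]).
Proof. by apply: gen_same => f; split => -[v bv ->]; exists v; rewrite ?inE in bv *. Qed.

Lemma monomial_exp_prime j : monomial (exp_prime (K:=K) i j).
Proof.
by apply: monomialP; eexists; apply: same_ideal_trans (exp_prime_mprime j) (mprime_mideal _).
Qed.

Lemma exp_primeX j d : exp_prime (K:=K) i j 'X_[d] <-> (0 < bsum d j)%N.
Proof.
rewrite (exp_prime_mprime j _) mprimeX; split.
  by case=> v; rewrite inE => bv dv; apply: leq_trans dv (bsum_ge _ bv).
by case/bsum_gt0 => v bv dv; exists v; rewrite ?inE.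
Qed.

Lemma exp_prime_powX j k d : ideal_pow (exp_prime (K:=K) i j) k 'X_[d] <-> (k <= bsum d j)%N.
Proof.
elim: k d => [|k IH] d; first by split.
rewrite (ideal_powSX _ _ (monomial_exp_prime j)); split.
  case=> a [b [/IH Ha /exp_primeX Hb /bsum_mono /mnm_lepP /(_ j)]].
  by rewrite bsumD mnmDE; lia.
move=> H; have [v bv /mnm1_le le] := bsum_gt0 (leq_ltn_trans (leq0n k) H).
exists (d - U_(v))%MM, U_(v)%MM; split; last by rewrite submK // lepm_refl.
- by apply/IH; rewrite bsumB // mnmBE (bsumU_inblock bv) mnm1E eqxx; lia.
- by apply/exp_primeX; rewrite (bsumU_inblock bv) mnm1E eqxx.
Qed.

Lemma monomial_exp_fold (u : 'X_{1..n}) (l : seq 'I_n) : uniq l ->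
  let J := foldr (@ideal_mul _) (fun _ : RN => True)
             [seq ideal_pow (exp_prime (K:=K) i j) (u j) | j <- l] in
  monomial J /\ forall d, J 'X_[d] <-> (forall j, j \in l -> (u j <= bsum d j)%N).
Proof.
elim: l => [|j l IH] /=; first by split; [exact: monomial_total | ].
case/andP => jl /IH [E HX]; split; first exact/monomial_mul/E/monomial_pow/monomial_exp_prime.
move=> d; rewrite ideal_mulX //; last exact/monomial_pow/monomial_exp_prime.
split.
  case=> a [b [/exp_prime_powX Ha /HX Hb /bsum_mono /mnm_lepP Hs]] j'; rewrite inE.
  by case/orP => [/eqP ->|/Hb]; move: (Hs j) (Hs j'); rewrite bsumD !mnmDE; lia.
move=> H; exists (mnm_inblock j d), (mnm_offblock j d); split.
- by apply/exp_prime_powX; rewrite bsum_inblock; apply: H; rewrite inE eqxx.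
- apply/HX => j' j'l; rewrite bsum_offblock; first by apply: H; rewrite inE j'l orbT.
  by apply: contraNneq jl => <-.
- by rewrite mnm_inblock_offblock lepm_refl.
Qed.

Lemma monomial_exp_monideal u : monomial (exp_monideal (K:=K) i u).
Proof. exact: (monomial_exp_fold u (enum_uniq 'I_n)).1. Qed.

Lemma exp_monidealX u d : exp_monideal (K:=K) i u 'X_[d] <-> (u <= bsum d)%MM.
Proof.
rewrite /exp_monideal (monomial_exp_fold u (enum_uniq 'I_n)).2.
by split => [H|/mnm_lepP H j _ //]; apply/mnm_lepP => j; apply: H; rewrite mem_enum.
Qed.

Variable I : {mpoly K[n]} -> Prop.

Lemma monomial_expansion : monomial (expansion i I).
Proof. by apply: monomial_gen => u _; apply: monomial_exp_monideal. Qed.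

Hypothesis EI : monomial I.

Lemma expansionX d : expansion i I 'X_[d] <-> I 'X_[bsum d].
Proof.
rewrite /expansion genX => [|u _]; last exact: monomial_exp_monideal.
split; first by case=> u [Iu _] /exp_monidealX; apply: monomial_up EI Iu.
by case/(mingen_ex EI) => u mu le; exists u => //; apply/exp_monidealX.
Qed.

Lemma expansion_powX m d : ideal_pow (expansion i I) m 'X_[d] <-> ideal_pow I m 'X_[bsum d].
Proof.
elim: m d => [|m IH] d //.
rewrite (ideal_powSX _ _ monomial_expansion) (ideal_powSX _ _ EI); split.
  case=> a [b [/IH Ha /expansionX Hb le]]; exists (bsum a), (bsum b); split => //.
  by rewrite -bsumD; apply: bsum_mono.
case=> a' [b' [Ha Hb le]].
have [a ad sa] := bsum_split (lepm_trans (lem_addr a' b') le).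
exists a, (d - a)%MM; split; last by rewrite addmC submK // lepm_refl.
- by apply/IH; rewrite sa.
- apply/expansionX; apply: monomial_up EI Hb _; rewrite bsumB // sa.
  by apply/mnm_lepP => j; move/mnm_lepP: le => /(_ j); rewrite mnmBE mnmDE; lia.
Qed.

End Expansion.

Section ExpansionAss.
Variables (K : fieldType) (n : nat) (i : 'I_n -> nat).
Hypothesis ipos : forall j, (0 < i j)%N.
Local Notation N := (expN i).
Variables (J1 : {mpoly K[n]} -> Prop) (J2 : {mpoly K[N]} -> Prop).
Hypothesis J2X : forall d, J2 'X_[d] <-> J1 'X_[bsum d].

Lemma ass_set_expand A : ass_set J1 A -> ass_set J2 (expand_set i A).
Proof.
case=> a [Ja HA Hd]; have [c [sc _]] := bsum_lift ipos a.
exists c; split.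
- by move/J2X; rewrite sc.
- move=> v; rewrite inE => /existsP [j /andP [jA bj]].
  by apply/J2X; rewrite bsumD sc (bsumU_inblock bj); apply: HA.
- move=> d Hdd /J2X; rewrite bsumD sc; apply: Hd => j jA; rewrite bsumE big1 // => v bv.
  by apply: Hdd; rewrite inE; apply/existsP; exists j; rewrite jA.
Qed.

Lemma ass_witness_inblock c B v : ass_witness J2 c B -> v \in B ->
  exists2 j, inblock j v & J1 'X_[bsum c + U_(j)].
Proof.
case=> Jc HB _ vB; have := HB v vB; rewrite J2X bsumD.
case: (boolP [exists j, inblock j v]) => [/existsP [j bj]|H].
  by rewrite (bsumU_inblock bj) => J; exists j.
rewrite bsumU_outside ?addm0; first by move/J2X.
by move=> j; apply: contra H => bj; apply/existsP; exists j.
Qed.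

Lemma ass_set_expandV B : ass_set J2 B -> exists2 A, B = expand_set i A & ass_set J1 A.
Proof.
case=> c Hc; have inB := ass_witness_inblock Hc; case: Hc => Jc _ Hd.
pose A := [set j | [exists v in B, inblock j v]].
have BA : B = expand_set i A.
  apply/setP => v; rewrite inE; apply/idP/idP.
    move=> vB; have [j bj _] := inB v vB; apply/existsP; exists j.
    by rewrite bj andbT inE; apply/existsP; exists v; rewrite vB.
  case/existsP => j /andP []; rewrite inE => /existsP [v' /andP [v'B bv']] bv.
  apply: NNPP => /negP vB; have [j' bj' J'] := inB v' v'B.
  rewrite -(inblock_uniq bv' bj') in J'.
  apply: (Hd U_(v)%MM); last by apply/J2X; rewrite bsumD (bsumU_inblock bv).
  by move=> w wB; rewrite mnm1E; case: eqP => // e; rewrite e wB in vB.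
exists A => //; exists (bsum c); split.
- by move/J2X.
- move=> j; rewrite inE => /existsP [v /andP [vB bv]].
  by have [j' bj'] := inB v vB; rewrite (inblock_uniq bv bj').
- move=> d Hdd J1d; have [e [se He]] := bsum_lift ipos d.
  apply: (Hd e); last by apply/J2X; rewrite bsumD se.
  move=> v; rewrite BA inE => /existsP [j /andP [jA bj]].
  by apply: He => j' bj'; rewrite -(inblock_uniq bj bj'); apply: Hdd.
Qed.

Lemma ass_set_expandP B : ass_set J2 B <-> exists2 A, B = expand_set i A & ass_set J1 A.
Proof. by split=> [|[A ->]]; [apply: ass_set_expandV | apply: ass_set_expand]. Qed.

End ExpansionAss.

Section Weighting.
Variables (K : fieldType) (n : nat) (w : 'I_n -> nat).
Hypothesis wpos : forall j, (0 < w j)%N.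
Local Notation M := 'X_{1..n}.
Implicit Types (d c a b u q : M).

Definition wdiv d : M := [multinom (d j %/ w j)%N | j < n].

Lemma wmon_le u d : (wmon w u <= d)%MM = (u <= wdiv d)%MM.
Proof.
by apply/mnm_lepP/mnm_lepP => H j; move: (H j); rewrite !mnmE leq_divRL // mulnC.
Qed.

Lemma wmonK : cancel (wmon w) wdiv.
Proof. by move=> u; apply/mnmP => j; rewrite !mnmE mulKn. Qed.

Lemma wdivD_wmon c d : wdiv (c + wmon w d) = (wdiv c + d)%MM.
Proof. by apply/mnmP => j; rewrite !mnmDE !mnmE mulnC divnDMl. Qed.

Section WeightedIdeal.
Variable I : {mpoly K[n]} -> Prop.

Lemma weighted_mideal :
  same_ideal (weighted w I) (mideal (fun m => exists2 u, mingen I u & m = wmon w u)).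
Proof.
apply: gen_same => f; split => [[u mu ->]|[m [u mu ->] ->]]; last by exists u.
by exists (wmon w u) => //; exists u.
Qed.

Lemma monomial_weighted : monomial (weighted w I).
Proof. by apply: monomialP; eexists; exact: weighted_mideal. Qed.

Hypothesis EI : monomial I.

Lemma weightedX d : weighted w I 'X_[d] <-> I 'X_[wdiv d].
Proof.
rewrite (weighted_mideal _) midealX; split.
  by case=> s [u [Iu _] ->]; rewrite wmon_le => le; apply: monomial_up EI Iu le.
case/(mingen_ex EI) => u mu le; exists (wmon w u); first by exists u.
by rewrite wmon_le.
Qed.

Lemma weighted_powX m d : ideal_pow (weighted w I) m 'X_[d] <-> ideal_pow I m 'X_[wdiv d].
Proof.
elim: m d => [|m IH] d; first by split.
rewrite (ideal_powSX _ _ monomial_weighted) (ideal_powSX _ _ EI); split.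
  case=> a [b [/IH Ha /weightedX Hb /mnm_lepP le]]; exists (wdiv a), (wdiv b); split => //.
  apply/mnm_lepP => j; move: (le j); rewrite !mnmDE !mnmE => le'.
  by rewrite leq_divRL // mulnDl; apply: leq_trans le'; apply: leq_add; apply: leq_divM.
case=> a' [b' [Ha Hb /mnm_lepP le]]; exists (wmon w a'), (wmon w b'); split.
- by apply/IH; rewrite wmonK.
- by apply/weightedX; rewrite wmonK.
- apply/mnm_lepP => j; move: (le j); rewrite !mnmDE !mnmE.
  by rewrite leq_divRL // -mulnDr mulnC.
Qed.

End WeightedIdeal.

Variables J1 J2 : {mpoly K[n]} -> Prop.
Hypothesis E1 : monomial J1.
Hypothesis J2X : forall d, J2 'X_[d] <-> J1 'X_[wdiv d].

Lemma ass_set_wdiv A : ass_set J2 A -> ass_set J1 A.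
Proof.
case=> c [Jc HA Hd]; exists (wdiv c); split.
- by move/J2X.
- move=> i /HA /J2X H; apply: monomial_up E1 H _.
  apply/mnm_lepP => j; rewrite !mnmDE mnm1E !mnmE.
  have wj := wpos j; have h := ltn_ceil (c j) wj.
  rewrite -ltnS ltn_divLR //; set q := (c j %/ w j)%N in h *.
  by case: (i == j) h => /= h; nia.
- move=> d Hdd J1d; apply: (Hd (wmon w d)); first by move=> i iA; rewrite mnmE Hdd // muln0.
  by apply/J2X; rewrite wdivD_wmon.
Qed.

(* The witness [c_j = w_j q_j + (w_j - 1) [j \in A]] has quotient [q_j], and multiplying
   by [x_j] raises that quotient exactly when [j \in A]. *)
Lemma ass_set_wmon A : ass_set J1 A -> ass_set J2 A.
Proof.
case=> q [Jq HA Hd].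
pose c : M := [multinom (w j * q j + (if j \in A then (w j).-1 else 0))%N | j < n].
have small j : ((if j \in A then (w j).-1 else 0) %/ w j = 0)%N.
  by apply: divn_small; case: (j \in A); have := wpos j; lia.
have wdivc : wdiv c = q by apply/mnmP => j; rewrite !mnmE mulnC divnMDl // small addn0.
exists c; split.
- by move/J2X; rewrite wdivc.
- move=> i iA; apply/J2X; suff -> : wdiv (c + U_(i)) = (q + U_(i))%MM by apply: HA.
  apply/mnmP => j; rewrite !mnmDE mnm1E !mnmE -addnA mulnC divnMDl //.
  case: eqP => [<-|ne]; last by rewrite addn0 small.
  by rewrite iA addn1 prednK // divnn wpos.
- move=> d Hdd J2d.
  pose d' : M := [multinom if j \in A then 0%N else (d j %/ w j)%N | j < n].
  apply: (Hd d'); first by move=> i iA; rewrite mnmE iA.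
  move/J2X: J2d; have -> // : wdiv (c + d) = (q + d')%MM.
  apply/mnmP => j; rewrite !mnmDE !mnmE -addnA mulnC divnMDl //.
  case: (boolP (j \in A)) => jA; last by rewrite ?addn0.
  by rewrite Hdd // addn0 divn_small //; have := wpos j; lia.
Qed.

Lemma ass_set_weightedP A : ass_set J2 A <-> ass_set J1 A.
Proof. by split; [apply: ass_set_wdiv | apply: ass_set_wmon]. Qed.

End Weighting.

Theorem lemma4p11 (K : fieldType) (n : nat) (I : {mpoly K[n]} -> Prop) :
  is_monomial_ideal I ->
  (forall i : 'I_n -> nat, (forall j, 0 < i j)%N ->
     (nearly_copersistent I <-> nearly_copersistent (expansion i I))) /\
  (forall w : 'I_n -> nat, (forall j, 0 < w j)%N ->
     (nearly_copersistent I <-> nearly_copersistent (weighted w I))).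
Proof.
move=> HI; have EI := monomialP HI; split=> [i ipos | w wpos].
- apply: iff_trans (nearly_copersistent_sets EI) _.
  apply: iff_trans _ (iff_sym (nearly_copersistent_sets (monomial_expansion (i:=i) I))).
  apply: (nc_sets_transfer (expand_set_inj ipos)) => m B.
  exact/ass_set_expandP/expansion_powX.
- apply: iff_trans (nearly_copersistent_sets EI) _.
  apply: iff_trans _ (iff_sym (nearly_copersistent_sets (monomial_weighted w I))).
  apply: (nc_sets_transfer (phi := id)) => // m A.
  rewrite (ass_set_weightedP wpos (monomial_pow m EI) (weighted_powX wpos EI m)).
  by split=> [HA|[A' ->]]; first exists A.
Qed.
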